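(* Let $n\geq k\geq 3$ be odd integers with $\gcd(n,k-1)=1$. Then there exists a diagonal $\mathrm{M}^0_{\mathbb Z_k\oplus\mathbb Z_n}(n,n;k,k)$.
   Context: Let $(\Gamma,+)$ be an abelian group. A partially filled array is an array in which some cells may be empty. A zero-sum magic partially filled array $\mathrm{M}^0_\Gamma(n,n;k,k)$ is an $n\times n$ partially filled array with entries in $\Gamma$ in which every element of $\Gamma$ appears exactly once, each row and each column contains exactly $k$ filled cells, and the entries of each row and of each column sum to $0_\Gamma$. For an $n\times n$ partially filled array, cell $(i,j)$ belongs to the diagonal $D_r$ if $j-i\equiv r\pmod n$; such an array is diagonal if its nonempty cells are exactly those of $k$ consecutive diagonals (indices mod $n$). $\mathbb Z_N$ is the cyclic group of order $N$. *)

From mathcomp Require Import all_boot all_order all_algebra.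
Set Implicit Arguments. Unset Strict Implicit. Unset Printing Implicit Defensive.
Import GRing.Theory.
Local Open Scope ring_scope.

(* A partially filled n x n array with entries in G: None = empty cell. *)
Definition pfarray (G : Type) (n : nat) := 'I_n -> 'I_n -> option G.

Definition entry (G : zmodType) n (A : pfarray G n) i j : G := odflt 0 (A i j).

(* Zero-sum magic partially filled array M^0_G(n,n;k,k). *)
Definition zero_sum_magic (G : zmodType) (n k : nat) (A : pfarray G n) : Prop :=
  [/\
      (forall g : G, #|[set p : 'I_n * 'I_n | A p.1 p.2 == Some g]| = 1%N),
      (forall i : 'I_n, #|[set j : 'I_n | A i j != None]| = k),
      (forall j : 'I_n, #|[set i : 'I_n | A i j != None]| = k),
      (forall i : 'I_n, \sum_(j < n) entry A i j = 0) &
      (forall j : 'I_n, \sum_(i < n) entry A i j = 0)].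

Definition diag_index n (i j : 'I_n) : nat := ((j + n - i) %% n)%N.

Definition is_diagonal (G : eqType) (n k : nat) (A : pfarray G n) : Prop :=
  exists r : nat, forall i j : 'I_n,
    A i j != None <-> exists2 t : nat, (t < k)%N & diag_index i j = ((r + t) %% n)%N.

From mathcomp Require Import all_boot all_order all_algebra.
From mathcomp Require Import zify.
Import GRing.Theory.

(* Fill the diagonals D_0, ..., D_(k-1): the cell (i, i + t) with t < k gets
   (t, c_t i), where c_t = 1 except for the middle diagonal t = (k-1)/2,
   where c_t = 1 - k.  As k is odd, sum_t t = k (k-1)/2 vanishes in Z_k, and
   the weights satisfy sum_t c_t = 0 and sum_t c_t t = 0 in any ring, which
   makes the Z_n-parts of the row (i fixed) and column (i = j - t) sums vanish.
   Since gcd(n, k-1) = 1 every c_t is a unit of Z_n, so each element (t, b) of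
   Z_k x Z_n occurs exactly once, in row b / c_t of the diagonal D_t.
   The construction does not need n to be odd. *)

Section DiagonalCoordinates.

Context {n : nat} (n_gt0 : (0 < n)%N).

Lemma diag_indexE (i j : 'I_n) : diag_index i j = ((j + (n - i)) %% n)%N.
Proof. by rewrite /diag_index addnBA // ltnW. Qed.

Definition col_shift (i : 'I_n) (t : nat) : 'I_n :=
  Ordinal (ltn_pmod (i + t) n_gt0).

Definition row_shift (j : 'I_n) (t : nat) : 'I_n :=
  Ordinal (ltn_pmod (j + (n - t)) n_gt0).

Lemma diag_index_col_shift (i : 'I_n) t :
  (t < n)%N -> diag_index i (col_shift i t) = t.
Proof.
move=> lt_tn; rewrite diag_indexE /= modnDml addnAC subnKC 1?ltnW //.
by rewrite modnDl modn_small.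
Qed.

Lemma col_shift_diag_index (i j : 'I_n) : col_shift i (diag_index i j) = j.
Proof.
apply: val_inj; rewrite diag_indexE /= modnDmr addnCA subnKC 1?ltnW //.
by rewrite modnDr modn_small.
Qed.

Lemma col_shift_row_shift (j : 'I_n) t :
  (t <= n)%N -> col_shift (row_shift j t) t = j.
Proof.
move=> le_tn; apply: val_inj => /=.
by rewrite modnDml -addnA subnK // modnDr modn_small.
Qed.

Lemma diag_index_row_shift (j : 'I_n) t :
  (t < n)%N -> diag_index (row_shift j t) j = t.
Proof.
move=> lt_tn.
by rewrite -{2}(col_shift_row_shift j _ (ltnW lt_tn)) diag_index_col_shift.
Qed.

Lemma col_shift_inj (i : 'I_n) : injective (fun t : 'I_n => col_shift i t).
Proof.
move=> t1 t2 /(congr1 (diag_index i)).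
by rewrite !diag_index_col_shift // => /val_inj.
Qed.

Lemma row_shift_inj (j : 'I_n) : injective (fun t : 'I_n => row_shift j t).
Proof.
move=> t1 t2 /(congr1 (fun i => diag_index i j)).
by rewrite !diag_index_row_shift // => /val_inj.
Qed.

Context {R : Type} {idx : R} (op : Monoid.com_law idx) {k : nat}.
Hypothesis k_le_n : (k <= n)%N.

Lemma big_row_diag (i : 'I_n) (F : 'I_n -> nat -> R) :
  \big[op/idx]_(j < n | (diag_index i j < k)%N) F j (diag_index i j)
    = \big[op/idx]_(t < k) F (col_shift i t) t.
Proof.
rewrite (reindex_inj (col_shift_inj i)) /=.
rewrite (@big_ord_widen _ idx op _ _ (fun t => F (col_shift i t) t) k_le_n).
by apply: eq_big => [t|t _]; rewrite diag_index_col_shift.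
Qed.

Lemma big_col_diag (j : 'I_n) (F : 'I_n -> nat -> R) :
  \big[op/idx]_(i < n | (diag_index i j < k)%N) F i (diag_index i j)
    = \big[op/idx]_(t < k) F (row_shift j t) t.
Proof.
rewrite (reindex_inj (row_shift_inj j)) /=.
rewrite (@big_ord_widen _ idx op _ _ (fun t => F (row_shift j t) t) k_le_n).
by apply: eq_big => [t|t _]; rewrite diag_index_row_shift.
Qed.

End DiagonalCoordinates.

Local Open Scope ring_scope.

Lemma sum_pair (U V : zmodType) (I : Type) (r : seq I) (P : pred I)
    (a : I -> U) (b : I -> V) :
  \sum_(i <- r | P i) (a i, b i)
    = (\sum_(i <- r | P i) a i, \sum_(i <- r | P i) b i).
Proof. by rewrite [LHS]surjective_pairing !raddf_sum. Qed.

Lemma sum_ord_natr (R : nzSemiRingType) k : \sum_(t < k) (t%:R : R) = 'C(k, 2)%:R.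
Proof. by rewrite -natr_sum -bin2_sum big_mkord. Qed.

Definition diag_weight (R : nzRingType) (k t : nat) : R :=
  if t == k.-1./2 then 1 - k%:R else 1.

Section DiagonalWeights.

Variables (R : nzRingType) (k : nat).
Hypothesis k_gt0 : (0 < k)%N.

Lemma sum_diag_weightM (f : nat -> R) :
  \sum_(t < k) diag_weight R k t * f t = \sum_(t < k) f t - k%:R * f k.-1./2.
Proof.
have mid_lt_k : (k.-1./2 < k)%N by rewrite -divn2; lia.
pose mid : 'I_k := Ordinal mid_lt_k.
rewrite (bigD1 mid) // [in RHS](bigD1 mid) //= /diag_weight eqxx mulrBl mul1r addrAC.
congr (_ + _ - _); apply: eq_bigr => t ne_t_mid.
by rewrite ifN ?mul1r // -[k.-1./2]/(val mid) (inj_eq val_inj).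
Qed.

Lemma sum_diag_weight : \sum_(t < k) diag_weight R k t = 0.
Proof.
under eq_bigr do rewrite -[diag_weight _ _ _]mulr1.
by rewrite (sum_diag_weightM (fun=> 1)) sumr_const card_ord mulr1 subrr.
Qed.

Hypothesis odd_k : odd k.

Lemma sum_diag_weight_id : \sum_(t < k) diag_weight R k t * t%:R = 0.
Proof.
by rewrite (sum_diag_weightM (fun t => t%:R)) sum_ord_natr bin2odd // natrM subrr.
Qed.

End DiagonalWeights.

Lemma diag_weight_unit n k t : (1 < n)%N -> (0 < k)%N -> coprime n k.-1 ->
  diag_weight 'Z_n k t \is a GRing.unit.
Proof.
move=> n_gt1 k_gt0 cop; rewrite /diag_weight; case: ifP => _; last exact: unitr1.
have -> : 1 - k%:R = - (k.-1)%:R :> 'Z_n.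
  by rewrite -{1}(prednK k_gt0) -natr1 opprD addrCA subrr addr0.
by rewrite unitrN unitZpE.
Qed.

Definition magic_diag (n k : nat) : pfarray ('Z_k * 'Z_n) n :=
  fun i j => let t := diag_index i j in
    if (t < k)%N then Some (t%:R, diag_weight _ k t * i%:R) else None.

Section MagicDiag.

Variables (n k : nat).
Hypotheses (k_gt1 : (1 < k)%N) (k_le_n : (k <= n)%N) (odd_k : odd k).

Let k_gt0 : (0 < k)%N. Proof. exact: ltnW. Qed.
Let n_gt1 : (1 < n)%N. Proof. exact: leq_trans k_le_n. Qed.
Let n_gt0 : (0 < n)%N. Proof. exact: ltnW. Qed.

Local Notation A := (magic_diag n k).

Lemma magic_diag_filled (i j : 'I_n) : (A i j != None) = (diag_index i j < k)%N.
Proof. by rewrite /magic_diag; case: ifP. Qed.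

Lemma entry_magic_diag (i j : 'I_n) : entry A i j =
  if (diag_index i j < k)%N
  then ((diag_index i j)%:R, diag_weight _ k (diag_index i j) * i%:R) else 0.
Proof. by rewrite /entry /magic_diag; case: ifP. Qed.

Lemma natr_row_shift (j : 'I_n) t : (t <= n)%N ->
  ((row_shift n_gt0 j t : nat)%:R : 'Z_n) = j%:R - t%:R.
Proof.
by move=> le_tn; rewrite /= Zp_nat_mod // natrD natrB // pchar_Zp // add0r.
Qed.

Lemma magic_diag_row_card (i : 'I_n) : #|[set j | A i j != None]| = k.
Proof.
rewrite -sum1_card (eq_bigl (fun j => diag_index i j < k)%N); last first.
  by move=> j; rewrite inE magic_diag_filled.
by rewrite (big_row_diag n_gt0 _ k_le_n i (fun _ _ => 1%N)) sum1_card card_ord.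
Qed.

Lemma magic_diag_col_card (j : 'I_n) : #|[set i | A i j != None]| = k.
Proof.
rewrite -sum1_card (eq_bigl (fun i => diag_index i j < k)%N); last first.
  by move=> i; rewrite inE magic_diag_filled.
by rewrite (big_col_diag n_gt0 _ k_le_n j (fun _ _ => 1%N)) sum1_card card_ord.
Qed.

Lemma magic_diag_row_sum (i : 'I_n) : \sum_(j < n) entry A i j = 0.
Proof.
under eq_bigr do rewrite entry_magic_diag.
rewrite -big_mkcond (big_row_diag n_gt0 _ k_le_n i
  (fun _ t => (t%:R, diag_weight _ k t * i%:R))) /= sum_pair.
rewrite sum_ord_natr bin2odd // natrM pchar_Zp // mul0r.
by rewrite -mulr_suml sum_diag_weight // mul0r.
Qed.

Lemma magic_diag_col_sum (j : 'I_n) : \sum_(i < n) entry A i j = 0.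
Proof.
under eq_bigr do rewrite entry_magic_diag.
rewrite -big_mkcond (big_col_diag n_gt0 _ k_le_n j
  (fun i t => (t%:R, diag_weight _ k t * (i : nat)%:R))) /= sum_pair.
rewrite sum_ord_natr bin2odd // natrM pchar_Zp // mul0r.
under eq_bigr => t _ do rewrite natr_row_shift ?mulrBr 1?ltnW ?(leq_trans _ k_le_n) //.
by rewrite sumrB -mulr_suml sum_diag_weight // sum_diag_weight_id // mul0r subrr.
Qed.

Hypothesis coprime_nk : coprime n k.-1.

Lemma magic_diag_uniq (g : 'Z_k * 'Z_n) :
  #|[set p : 'I_n * 'I_n | A p.1 p.2 == Some g]| = 1%N.
Proof.
case: g => a b; set t : nat := a.
have lt_tk : (t < k)%N by rewrite -[X in (_ < X)%N](Zp_cast k_gt1) ltn_ord.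
have unit_w : diag_weight 'Z_n k t \is a GRing.unit by exact: diag_weight_unit.
have lt_row : (b / diag_weight _ k t < n)%N.
  by rewrite -[X in (_ < X)%N](Zp_cast n_gt1) ltn_ord.
pose i0 : 'I_n := Ordinal lt_row.
rewrite (_ : [set p | _] = [set (i0, col_shift n_gt0 i0 t)]) ?cards1 //.
apply/setP => -[i j]; rewrite !inE /= /magic_diag.
apply/eqP/eqP => [|[-> ->]]; last first.
  rewrite diag_index_col_shift ?lt_tk ?(leq_trans lt_tk) //.
  by rewrite !natr_Zp mulrC divrK.
case: ifP => // lt_dk [/(congr1 (@nat_of_ord _)) + w_i].
rewrite val_Zp_nat // modn_small // => diag_ij; rewrite diag_ij in w_i.
have i_eq : i = i0.
  have : i%:R = b / diag_weight _ k t by rewrite -w_i mulrC mulKr.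
  move/(congr1 (@nat_of_ord _)); rewrite val_Zp_nat // modn_small // => val_i.
  exact: val_inj.
by rewrite -i_eq /t -diag_ij col_shift_diag_index.
Qed.

End MagicDiag.

Lemma magic_diag_is_diagonal n k : (k <= n)%N -> is_diagonal k (magic_diag n k).
Proof.
move=> k_le_n; exists 0%N => i j; rewrite magic_diag_filled.
have lt_dn : (diag_index i j < n)%N by rewrite ltn_pmod // (leq_ltn_trans _ (ltn_ord i)).
split=> [lt_dk | [t lt_tk]]; first by exists (diag_index i j); rewrite ?add0n ?modn_small.
by rewrite add0n modn_small ?(leq_trans lt_tk) // => ->.
Qed.

Theorem mainTheorem10 (n k : nat) :
  (3 <= k)%N -> (k <= n)%N -> odd n -> odd k -> coprime n k.-1 ->
  exists A : pfarray ('Z_k * 'Z_n)%type n,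
    zero_sum_magic k A /\ is_diagonal k A.
Proof.
move=> k_ge3 k_le_n _ odd_k coprime_nk; have k_gt1 : (1 < k)%N by exact: ltnW.
exists (magic_diag n k); split; last exact: magic_diag_is_diagonal.
split.
- exact: magic_diag_uniq.
- exact: magic_diag_row_card.
- exact: magic_diag_col_card.
- exact: magic_diag_row_sum.
- exact: magic_diag_col_sum.
Qed.
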